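(* Let $K$ be a field of characteristic $0$, $S=K[x_1,\dots,x_n]$, and let $I,J\subset S$ be Borel-fixed ideals, where $I$ has minimal monomial generators $f_1,\dots,f_m$ all of the same degree. Let $\varphi\in\mathrm{GL}_n(K)$ be upper triangular. Then $\widetilde\varphi(Z_t(I,S/J))\subset Z_t(I,S/J)$ for every $t$.
   Context: A matrix $\varphi=(a_{ij})\in\mathrm{GL}_n(K)$ acts on $S$ by $\varphi(f)(x_1,\dots,x_n)=f(\sum_k a_{k1}x_k,\dots,\sum_k a_{kn}x_k)$. A monomial ideal is Borel-fixed if $\varphi(I)=I$ for all invertible upper triangular $\varphi$ (equivalently in characteristic $0$: $fx_j\in I$, $i<j$ imply $fx_i\in I$ for monomials $f$). Let $F=\bigoplus_{i=1}^m S(-\deg f_i)$ with basis $e_1,\dots,e_m$, $\phi(e_i)=f_i$, and $K(I,S/J)=\bigwedge^\bullet F\otimes_S S/J$ the Koszul complex with differential induced by $\phi$; $Z_t(I,S/J)$ are its cycles in position $t$. For upper triangular $\varphi$: since $\varphi(J)=J$, $\varphi$ induces an automorphism $\varphi(h+J)=\varphi(h)+J$ of $S/J$; since $\varphi(I)=I$ and the $f_i$ have the same degree, one writes uniquely $\varphi(f_i)=\sum_j c_{ij}f_j$ with $c_{ij}\in K$, and sets $\varphi(e_i)=\sum_j c_{ij}e_j$. Then $\widetilde\varphi:K_t(I,S/J)\to K_t(I,S/J)$ is the $K$-linear map with $\widetilde\varphi(e_{u_1}\wedge\cdots\wedge e_{u_t}\otimes h)=\varphi(e_{u_1})\wedge\cdots\wedge\varphi(e_{u_t})\otimes\varphi(h)$.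 *)

From HB Require Import structures.
From mathcomp Require Import all_boot all_order all_algebra.
From mathcomp Require Import mpoly.
Set Implicit Arguments. Unset Strict Implicit. Unset Printing Implicit Defensive.
Import Order.TTheory GRing.Theory.
Local Open Scope ring_scope.

Section Defs.
Variables (K : fieldType) (n : nat).
Local Notation S := {mpoly K[n]}.

Definition act (A : 'M[K]_n) (f : S) : S :=
  f \mPo [tuple (\sum_(k < n) A k i *: 'X_k) | i < n].

Definition upper_triangular (A : 'M[K]_n) : Prop :=
  forall i j : 'I_n, (j < i)%N -> A i j = 0.

Definition is_ideal (I : S -> Prop) : Prop :=
  [/\ I 0, (forall f g, I f -> I g -> I (f + g)) & (forall h f, I f -> I (h * f))].

Definition monomial_ideal (I : S -> Prop) : Prop :=
  is_ideal I /\ (forall f, I f <-> (forall mo, mo \in msupp f -> I 'X_[mo])).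

Definition fixed_by (A : 'M[K]_n) (I : S -> Prop) : Prop :=
  (forall f, I f -> I (act A f)) /\ (forall g, I g -> exists2 f, I f & act A f = g).

Definition borel_fixed (I : S -> Prop) : Prop :=
  forall A : 'M[K]_n, upper_triangular A -> A \in unitmx -> fixed_by A I.

Definition gen_ideal_on (m : nat) (P : pred 'I_m) (f : 'I_m -> S) : S -> Prop :=
  fun g => exists a : 'I_m -> S, g = \sum_(i < m | P i) a i * f i.

Definition gen_ideal (m : nat) (f : 'I_m -> S) : S -> Prop := gen_ideal_on predT f.

Definition minimal_gens (m : nat) (f : 'I_m -> S) : Prop :=
  forall i : 'I_m, ~ gen_ideal_on (fun j => j != i) f (f i).

(* F (x) S/J is represented by its family of
   coefficients z : {set 'I_m} -> S, where z u is a representative in S of the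
   coefficient in S/J of e_{u_1} /\ ... /\ e_{u_t}, u_1 < ... < u_t the
   elements of u. *)

Definition in_Kt (m : nat) (t : nat) (z : {ffun {set 'I_m} -> S}) : Prop :=
  forall u : {set 'I_m}, #|u| != t -> z u = 0.

(* Koszul differential:
   d(e_{u_1}/\.../\e_{u_t} (x) h) = sum_k (-1)^(k+1) e_{u_1}/\..^k../\e_{u_t} (x) f_{u_k} h. *)
Definition koszul_d (m : nat) (f : 'I_m -> S) (z : {ffun {set 'I_m} -> S})
  : {ffun {set 'I_m} -> S} :=
  [ffun v : {set 'I_m} =>
     \sum_(i < m | i \notin v) (-1) ^+ #|[set j in v | (j < i)%N]| * f i * z (i |: v)].

Definition is_cycle (m : nat) (f : 'I_m -> S) (J : S -> Prop)
  (z : {ffun {set 'I_m} -> S}) : Prop :=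
  forall v, J (koszul_d f z v).

Definition ninv (m : nat) (s : seq 'I_m) : nat :=
  let s' := map val s in
  (\sum_(a < size s) \sum_(b < size s | (a < b)%N) (nth 0 s' b < nth 0 s' a))%N.

(* e_{s_1} /\ ... /\ e_{s_t} = sum_v basis_wedge s v e_v
   (e_v = e_{v_1} /\ ... /\ e_{v_t} with v_1 < ... < v_t). *)
Definition basis_wedge (m : nat) (s : seq 'I_m) (v : {set 'I_m}) : K :=
  if uniq s && ([set x | x \in s] == v) then (-1) ^+ ninv s else 0.

(* phi-tilde: e_{u_1}/\.../\e_{u_t} (x) h  |->  phi(e_{u_1})/\.../\phi(e_{u_t}) (x) phi(h),
   where phi(e_i) = sum_j c_ij e_j, expanded multilinearly.  The k-th smallest
   element of u is enum_val k. *)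
Definition phi_tilde (m : nat) (A : 'M[K]_n) (c : 'M[K]_m) (z : {ffun {set 'I_m} -> S})
  : {ffun {set 'I_m} -> S} :=
  [ffun v : {set 'I_m} =>
     \sum_(u : {set 'I_m}) \sum_(j : {ffun 'I_#|u| -> 'I_m})
        ((\prod_(k < #|u|) c (enum_val k) (j k)) * basis_wedge (codom j) v)
          *: act A (z u)].

End Defs.

From HB Require Import structures.
From mathcomp Require Import all_boot all_order all_algebra.
From mathcomp Require Import mpoly ring.
Import Order.TTheory GRing.Theory.
Local Open Scope ring_scope.
Set Implicit Arguments. Unset Strict Implicit. Unset Printing Implicit Defensive.

(* phi-tilde is a chain endomorphism of the Koszul complex.  The differential
   is the derivation of the exterior algebra sending e_i to f_i, i.e.
   d (e_y /\ a) = f_y a - e_y /\ d a; since act A is a ring endomorphism of S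
   with act A (f_i) = sum_j c_ij f_j = d (phi e_i), induction on the number of
   wedge factors gives d (phi-tilde z) = phi-tilde (d z).  The coefficients of
   the right-hand side are S-combinations of act A applied to the coefficients
   of d z, hence lie in J, an ideal stable under act A.  A wedge of t vectors
   stays in degree t.  Characteristic 0, minimality and equal degrees of the f_i
   and Borel-fixedness of I only serve to make the c_ij exist, which the
   statement takes as a hypothesis. *)

Section SetSums.
Variable T : finType.

Lemma sum_setD1 (R : nmodType) (F : T -> {set T} -> {set T} -> R) :
  \sum_(u : {set T}) \sum_(i in u) F i (u :\ i) u =
  \sum_(w : {set T}) \sum_(i | i \notin w) F i w (i |: w).
Proof.
rewrite (exchange_big_dep predT) // [RHS](exchange_big_dep predT) //=.
apply: eq_bigr => i _.
rewrite (reindex_onto (fun w => i |: w) (fun u => u :\ i)) /=; last first.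
  by move=> u iu; rewrite setD1K.
apply: eq_big => [w|w /andP [_ /eqP -> //]].
rewrite setU11 /=; case: (boolP (i \in w)) => iw.
  by apply/eqP => wi; move: iw; rewrite -wi setD11.
by rewrite setU1K ?eqxx.
Qed.

Lemma card_setI_count (p : pred T) (s : seq T) : uniq s ->
  #|[set j in [set x | x \in s] | p j]| = count p s.
Proof.
move=> us; rewrite -size_filter -(card_uniqP _) ?filter_uniq //.
by apply: eq_card => j; rewrite !inE mem_filter andbC.
Qed.

End SetSums.

Section OrdinalSets.
Variable m : nat.
Implicit Types (u : {set 'I_m}) (s : seq 'I_m).

Lemma ninv_cons y s :
  ninv (y :: s) = (count (fun x : 'I_m => (x < y)%N) s + ninv s)%N.
Proof.
rewrite /ninv /= (big_ord_recl (size s)) /=.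
rewrite big_mkcond (big_ord_recl (size s)) /= add0n.
congr (_ + _)%N.
  rewrite -sum1_count big_mkcond /=.
  transitivity (\sum_(k <- map val s) ((k < y)%N : nat))%N.
    by rewrite (big_nth 0) big_mkord size_map; apply: eq_bigr => i _; rewrite add0n.
  by rewrite big_map [RHS]big_mkcond; apply: eq_bigr => j _; case: ifP.
apply: eq_bigr => a _; rewrite big_mkcond (big_ord_recl (size s)) /= add0n.
by rewrite [RHS]big_mkcond; apply: eq_bigr => b _; rewrite /bump /= !add1n ltnS.
Qed.

Lemma card_setU1_lt (x z : 'I_m) u : x \notin u ->
  #|[set j in x |: u | (j < z)%N]| = ((x < z)%N + #|[set j in u | (j < z)%N]|)%N.
Proof.
move=> xu; case: (ltnP x z) => xz.
  have -> : [set j in x |: u | (j < z)%N] = x |: [set j in u | (j < z)%N].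
    by apply/setP => j; rewrite !inE; case: eqP => [->|] //=; rewrite xz.
  by rewrite cardsU1 inE (negbTE xu).
suff -> : [set j in x |: u | (j < z)%N] = [set j in u | (j < z)%N] by [].
apply/setP => j; rewrite !inE; case: eqP => [->|] //=.
by rewrite ltnNge xz andbF.
Qed.

Lemma map_enum_val u : [seq enum_val k | k <- enum 'I_#|u|] = enum u.
Proof.
have [u_gt0|] := boolP (0 < #|u|)%N; last first.
  rewrite -eqn0Ngt => /eqP u0.
  have -> : enum u = [::] by apply/nilP; rewrite /nilp -cardE u0.
  by apply/nilP; rewrite /nilp size_map size_enum_ord u0.
pose k0 : 'I_#|u| := Ordinal u_gt0.
apply: (@eq_from_nth _ (enum_val k0)); first by rewrite size_map size_enum_ord cardE.
move=> i; rewrite size_map size_enum_ord => ltiu.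
by rewrite (nth_map k0) ?size_enum_ord // (enum_val_nth (enum_val k0)) nth_enum_ord.
Qed.

Lemma sorted_enum u : sorted (fun a b : 'I_m => (a < b)%N) (enum u).
Proof.
rewrite /enum_mem -enumT; apply: sorted_filter; first exact: ltn_trans.
by have := iota_ltn_sorted 0 m; rewrite -val_enum_ord sorted_map.
Qed.

Lemma index_sorted_ltn s i : sorted (fun a b : 'I_m => (a < b)%N) s ->
  i \in s -> index i s = count (fun j : 'I_m => (j < i)%N) s.
Proof.
elim: s => [//|x s IH] /= sorted_xs.
have x_min : all (fun j : 'I_m => (x < j)%N) s.
  by apply: (order_path_min _ sorted_xs) => a b c; apply: ltn_trans.
rewrite inE; case: (x =P i) => [<-|/eqP xi] /= i_in_s.
  rewrite ltnn add0n; apply/esym/eqP; rewrite -leqn0 leqNgt -has_count.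
  by apply/hasPn => j js /=; rewrite -leqNgt ltnW //; move/allP: x_min => /(_ j js).
rewrite eq_sym (negbTE xi) /= in i_in_s.
have -> : (x < i)%N by move/allP: x_min => /(_ i i_in_s).
by rewrite IH // (path_sorted sorted_xs).
Qed.

Lemma index_enum_set u i : i \in u ->
  index i (enum u) = #|[set j in u :\ i | (j < i)%N]|.
Proof.
move=> iu; rewrite index_sorted_ltn ?sorted_enum ?mem_enum //.
rewrite -sum1_count big_enum_cond -sum1_card.
by apply: eq_bigl => j; rewrite !inE; case: (j =P i) => [->|] //=; rewrite ltnn andbF.
Qed.

Lemma rem_enum_set u i : rem i (enum u) = enum (u :\ i).
Proof.
rewrite rem_filter ?enum_uniq // /enum_mem -filter_predI.
by apply: eq_filter => j; rewrite /= !inE.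
Qed.

End OrdinalSets.

(* An element of the exterior algebra over R on e_0..e_(m-1) is given, as in
   koszul_d and phi_tilde, by its coefficient family a : {set 'I_m} -> R;
   lwedge y a is e_y /\ a. *)
Section ExteriorAlgebra.
Variables (R : comNzRingType) (m : nat).
Implicit Types (u v w : {set 'I_m}) (s : seq 'I_m) (a b : {set 'I_m} -> R).

Definition koszul_sign (x : 'I_m) v : R := (-1) ^+ #|[set j in v | (j < x)%N]|.

Definition wedge_coef s v : R :=
  if uniq s && ([set x | x \in s] == v) then (-1) ^+ ninv s else 0.

Definition lwedge (y : 'I_m) a v : R :=
  if y \in v then koszul_sign y (v :\ y) * a (v :\ y) else 0.

Definition koszul_diff (g : 'I_m -> R) a v : R :=
  \sum_(l < m | l \notin v) koszul_sign l v * g l * a (l |: v).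

Lemma koszul_signK x v : koszul_sign x v * koszul_sign x v = 1.
Proof. by rewrite /koszul_sign -exprD -signr_odd oddD addbb. Qed.

Lemma koszul_signU x z w : x \notin w ->
  koszul_sign z (x |: w) = (-1) ^+ (x < z)%N * koszul_sign z w.
Proof. by move=> xw; rewrite /koszul_sign card_setU1_lt // exprD. Qed.

Lemma sign_ltn_swap (l y : 'I_m) : l != y ->
  (-1) ^+ (y < l)%N * (-1) ^+ (l < y)%N = -1 :> R.
Proof.
move=> ly; rewrite -exprD.
have -> : ((y < l) + (l < y))%N = 1%N.
  by case: ltngtP => // /val_inj yl; rewrite yl eqxx in ly.
by rewrite expr1.
Qed.

Lemma wedge_coef_nil v : wedge_coef [::] v = (set0 == v)%:R.
Proof.
rewrite /wedge_coef /=.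
have -> : [set x | x \in ([::] : seq 'I_m)] = set0 by apply/setP => x; rewrite !inE.
have -> : ninv ([::] : seq 'I_m) = 0%N by rewrite /ninv big_ord0.
by case: (_ == _).
Qed.

Lemma wedge_coef_cons y s v : wedge_coef (y :: s) v = lwedge y (wedge_coef s) v.
Proof.
rewrite /wedge_coef /lwedge /koszul_sign ninv_cons /=.
have -> : [set x | x \in y :: s] = y |: [set x | x \in s].
  by apply/setP => x; rewrite !inE.
case: (boolP (y \in v)) => yv; last first.
  case: eqP => [sv|]; last by rewrite andbF.
  by move: yv; rewrite -sv setU11.
case: (boolP (y \in s)) => ys /=.
  case: eqP => [sv|]; last by rewrite andbF mulr0.
  have : y \in [set x | x \in s] by rewrite inE.
  by rewrite sv setD11.
have -> : (y |: [set x | x \in s] == v) = ([set x | x \in s] == v :\ y).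
  apply/eqP/eqP => [<-|->]; last by rewrite setD1K.
  by rewrite setU1K // inE.
case: (boolP (uniq s)) => us /=; last by rewrite mulr0.
case: eqP => [sv|]; last by rewrite mulr0.
by rewrite exprD -sv card_setI_count.
Qed.

Lemma lwedge_ext y a b v : (forall w, a w = b w) -> lwedge y a v = lwedge y b v.
Proof. by move=> ab; rewrite /lwedge ab. Qed.

Lemma lwedge_sum I (r : seq I) (P : pred I) (F : I -> {set 'I_m} -> R) y v :
  lwedge y (fun w => \sum_(i <- r | P i) F i w) v = \sum_(i <- r | P i) lwedge y (F i) v.
Proof. by rewrite /lwedge; case: ifP => _; [rewrite mulr_sumr | rewrite big1]. Qed.

Lemma lwedgeZ k a y v : lwedge y (fun w => k * a w) v = k * lwedge y a v.
Proof. by rewrite /lwedge; case: ifP => _; [rewrite mulrCA | rewrite mulr0]. Qed.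

Lemma koszul_diff_sum g I (r : seq I) (P : pred I) (F : I -> {set 'I_m} -> R) v :
  koszul_diff g (fun w => \sum_(i <- r | P i) F i w) v =
  \sum_(i <- r | P i) koszul_diff g (F i) v.
Proof. by rewrite /koszul_diff; under eq_bigr do rewrite mulr_sumr; exact: exchange_big. Qed.

Lemma koszul_diffZ g k a v : koszul_diff g (fun w => k * a w) v = k * koszul_diff g a v.
Proof. by rewrite /koszul_diff mulr_sumr; apply: eq_bigr => l _; rewrite mulrCA. Qed.

Lemma koszul_diff_lwedge g y a v :
  koszul_diff g (lwedge y a) v = g y * a v - lwedge y (koszul_diff g a) v.
Proof.
rewrite /koszul_diff /lwedge.
case: (boolP (y \in v)) => yv; last first.
  rewrite (bigD1 y yv) /= setU11 setU1K // big1 ?addr0 ?subr0.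
    by rewrite mulrCA !mulrA koszul_signK mul1r.
  move=> l /andP [lv ly]; rewrite in_setU1 (negbTE yv) orbF.
  by rewrite eq_sym (negbTE ly) mulr0.
have yvy : y \notin v :\ y by rewrite setD11.
rewrite (bigD1 y yvy) /= setD1K // mulrDr.
have -> : koszul_sign y (v :\ y) * (koszul_sign y (v :\ y) * g y * a v) = g y * a v.
  by rewrite !mulrA koszul_signK mul1r.
rewrite opprD addrA subrr add0r mulr_sumr -sumrN.
apply: eq_big => [l|l lv].
  by rewrite !inE; case: eqP => [->|_] //=; rewrite ?yv ?andbT.
have ly : l != y by apply: contraNneq lv => ->.
have lvy : l \notin v :\ y by rewrite inE negb_and lv orbT.
have -> : (l |: v) :\ y = l |: (v :\ y).
  by apply/setP => x; rewrite !inE; case: (x =P l) => [->|] //=; rewrite ly.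
have -> : koszul_sign l v = (-1) ^+ (y < l)%N * koszul_sign l (v :\ y).
  by rewrite -koszul_signU // setD1K.
rewrite in_setU1 yv orbT (koszul_signU y lvy).
set s1 := koszul_sign l _; set s2 := koszul_sign y _; set x := a _.
have -> : (-1) ^+ (y < l)%N * s1 * g l * ((-1) ^+ (l < y)%N * s2 * x) =
  ((-1) ^+ (y < l)%N * (-1) ^+ (l < y)%N) * (s2 * (s1 * g l * x)) by ring.
by rewrite sign_ltn_swap // mulN1r.
Qed.

(* The coefficients of phi(e_(s_1)) /\ ... /\ phi(e_(s_t)), where
   phi(e_x) = sum_y cc x y e_y. *)
Fixpoint wedge_image (cc : 'I_m -> 'I_m -> R) s : {set 'I_m} -> R :=
  if s is x :: s' then fun v => \sum_(y < m) cc x y * lwedge y (wedge_image cc s') v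
  else wedge_coef [::].

Lemma koszul_diff_wedge_image g cc s : uniq s -> forall v,
  koszul_diff g (wedge_image cc s) v = \sum_(i <- s) (-1) ^+ (index i s) *
     (\sum_(y < m) cc i y * g y) * wedge_image cc (rem i s) v.
Proof.
elim: s => [_ v|x s IH /= /andP [xs us] v].
  rewrite big_nil /koszul_diff big1 // => l _.
  rewrite /= wedge_coef_nil; case: eqP => [lv|_]; last by rewrite mulr0.
  by have := setU11 l v; rewrite -lv inE.
rewrite koszul_diff_sum /=.
under eq_bigr do rewrite koszul_diffZ koszul_diff_lwedge mulrBr.
rewrite sumrB big_cons /= eqxx expr0 mul1r mulr_suml.
congr (_ + _); first by apply: eq_bigr => y _; rewrite mulrA.
under eq_bigr do rewrite (lwedge_ext _ _ (IH us)) lwedge_sum mulr_sumr.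
rewrite exchange_big /= -sumrN !big_seq; apply: eq_bigr => i i_in_s.
have -> : (x == i) = false by apply/negbTE; apply: contraNneq xs => ->.
under eq_bigr do rewrite lwedgeZ.
rewrite /= exprS mulN1r !mulNr; congr (- _).
by rewrite [RHS]mulr_sumr; apply: eq_bigr => y _; ring.
Qed.

Lemma koszul_diff_wedge_image_enum g cc u v :
  koszul_diff g (wedge_image cc (enum u)) v =
  \sum_(i in u) koszul_sign i (u :\ i) * (\sum_(y < m) cc i y * g y)
                * wedge_image cc (enum (u :\ i)) v.
Proof.
rewrite koszul_diff_wedge_image ?enum_uniq // big_enum /=.
by apply: eq_bigr => i iu; rewrite index_enum_set // rem_enum_set.
Qed.

Definition ffun_cons t (y : 'I_m) (j : {ffun 'I_t -> 'I_m}) : {ffun 'I_t.+1 -> 'I_m} :=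
  [ffun k => if unlift ord0 k is Some k' then j k' else y].

Lemma sum_ffunS t (F : {ffun 'I_t.+1 -> 'I_m} -> R) :
  \sum_j F j = \sum_(y < m) \sum_(j : {ffun 'I_t -> 'I_m}) F (ffun_cons y j).
Proof.
rewrite pair_big /=.
pose split_head (j : {ffun 'I_t.+1 -> 'I_m}) := (j ord0, [ffun k => j (lift ord0 k)]).
have split_bij : bijective split_head.
  exists (fun p => ffun_cons p.1 p.2) => [j|[y j]].
    by apply/ffunP => k; rewrite /= !ffunE; case: unliftP => [k' ->|->]; rewrite ?ffunE.
  rewrite /split_head /= !ffunE unlift_none; congr (_, _).
  by apply/ffunP => k; rewrite !ffunE liftK.
rewrite (reindex split_head (onW_bij _ split_bij)) /=; apply: eq_bigr => j _; congr F.
by apply/ffunP => k; rewrite /= !ffunE; case: unliftP => [k' ->|->]; rewrite ?ffunE.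
Qed.

Lemma codom_ffun_cons t y (j : {ffun 'I_t -> 'I_m}) :
  codom (ffun_cons y j) = y :: codom j.
Proof.
rewrite !codomE enum_ordSl /= ffunE unlift_none -map_comp; congr (_ :: _).
by apply: eq_map => k /=; rewrite ffunE liftK.
Qed.

Lemma wedge_image_expand cc t (e : 'I_t -> 'I_m) v :
  \sum_(j : {ffun 'I_t -> 'I_m}) (\prod_(k < t) cc (e k) (j k)) * wedge_coef (codom j) v
  = wedge_image cc [seq e k | k <- enum 'I_t] v.
Proof.
elim: t e v => [|t IH] e v.
  rewrite enum_ord0 /=.
  under eq_bigr do rewrite big_ord0 mul1r codomE enum_ord0 /=.
  by rewrite sumr_const card_ffun !card_ord expn0.
rewrite enum_ordSl /= -map_comp sum_ffunS; apply: eq_bigr => y _.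
rewrite (lwedge_ext _ _ (fun w => esym (IH (e \o lift ord0) w))) lwedge_sum mulr_sumr.
apply: eq_bigr => j _.
rewrite lwedgeZ -wedge_coef_cons -codom_ffun_cons big_ord_recl /= ffunE unlift_none.
by rewrite mulrA; congr (_ * _ * _); apply: eq_bigr => k _; rewrite ffunE liftK.
Qed.

End ExteriorAlgebra.

Section KoszulComplex.
Variables (K : fieldType) (n m : nat).
Local Notation S := {mpoly K[n]}.
Implicit Types (A : 'M[K]_n) (c : 'M[K]_m) (z : {ffun {set 'I_m} -> S}).

Lemma phi_tildeE A c z v :
  phi_tilde A c z v =
  \sum_(u : {set 'I_m}) wedge_image (fun i j => (c i j)%:MP) (enum u) v * act A (z u).
Proof.
rewrite ffunE; apply: eq_bigr => u _.
rewrite -(map_enum_val u) -wedge_image_expand mulr_suml; apply: eq_bigr => j _.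
rewrite -mul_mpolyC rmorphM rmorph_prod /=; congr (_ * _ * _).
rewrite /basis_wedge /wedge_coef; case: ifP => _; [exact: rmorph_sign | exact: mpolyC0].
Qed.

Lemma phi_tilde_in_Kt A c z t : in_Kt t z -> in_Kt t (phi_tilde A c z).
Proof.
move=> zt v vt; rewrite ffunE big1 // => u _; rewrite big1 // => j _.
have [ut|ut] := eqVneq #|u| t; last by rewrite zt // /act raddf0 scaler0.
suff -> : basis_wedge K (codom j) v = 0 by rewrite mulr0 scale0r.
rewrite /basis_wedge; case: ifP => // /andP [/card_uniqP uj /eqP jv].
by move: vt; rewrite -jv cardsE uj size_codom card_ord -ut eqxx.
Qed.

Lemma koszul_d_phi_tilde (f : 'I_m -> S) A c z :
  (forall i, act A (f i) = \sum_j c i j *: f j) ->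
  koszul_d f (phi_tilde A c z) = phi_tilde A c (koszul_d f z).
Proof.
move=> act_f; apply/ffunP => v; rewrite [RHS]phi_tildeE.
set cc := fun i j => (c i j)%:MP.
have act_fE i : \sum_(y < m) cc i y * f y = act A (f i).
  by rewrite act_f; apply: eq_bigr => y _; rewrite mul_mpolyC.
have actM : {morph act A : p q / p * q} by move=> p q; rewrite /act rmorphM.
have actD : {morph act A : p q / p + q} by move=> p q; rewrite /act rmorphD.
transitivity (\sum_(u : {set 'I_m}) koszul_diff f (wedge_image cc (enum u)) v * act A (z u)).
  rewrite ffunE; under eq_bigr do rewrite phi_tildeE mulr_sumr.
  rewrite exchange_big /=; apply: eq_bigr => u _.
  by rewrite /koszul_diff mulr_suml; apply: eq_bigr => i _; rewrite mulrA.
under eq_bigr do rewrite koszul_diff_wedge_image_enum mulr_suml.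
rewrite (sum_setD1 (fun i w u => koszul_sign S i w * (\sum_(y < m) cc i y * f y)
                                 * wedge_image cc (enum w) v * act A (z u))).
apply: eq_bigr => w _; rewrite ffunE (big_morph _ actD (rmorph0 _)) mulr_sumr.
apply: eq_bigr => i _; rewrite act_fE !actM /act rmorph_sign -/(act A _).
by rewrite /koszul_sign mulrCA mulrA.
Qed.

End KoszulComplex.

Theorem lemma4p1 (K : fieldType) (n m : nat)
  (mo : 'I_m -> 'X_{1..n}) (f : 'I_m -> {mpoly K[n]})
  (J : {mpoly K[n]} -> Prop) (A : 'M[K]_n) (c : 'M[K]_m) (t : nat) :
  [pchar K] =i pred0 ->
  (forall i, f i = 'X_[mo i]) ->
  minimal_gens f ->
  (forall i j, mdeg (mo i) = mdeg (mo j)) ->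
  borel_fixed (gen_ideal f) ->
  monomial_ideal J -> borel_fixed J ->
  upper_triangular A -> A \in unitmx ->
  (forall i, act A (f i) = \sum_j c i j *: f j) ->
  forall z : {ffun {set 'I_m} -> {mpoly K[n]}},
    in_Kt t z -> is_cycle f J z ->
    in_Kt t (phi_tilde A c z) /\ is_cycle f J (phi_tilde A c z).
Proof.
move=> _ _ _ _ _ [[J0 JD JM] _] J_borel A_ut A_unit act_f z zt z_cycle.
split; first exact: phi_tilde_in_Kt.
have [J_act _] := J_borel A A_ut A_unit.
move=> v; rewrite koszul_d_phi_tilde // phi_tildeE.
by apply: (big_ind J) => // u _; apply/JM/J_act.
Qed.
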